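(* Consider the distributed detection model in the context with $\alpha\le 0.5$. For $(P_{1,0},P_{0,1})\in[0,1]^2$ with $\alpha(P_{1,0}+P_{0,1})<1$, let $$T(P_{1,0},P_{0,1})=\frac{\ln\left[\frac{P_0}{P_1}\left(\frac{1-\pi_{1,0}}{1-\pi_{1,1}}\right)^{N}\right]}{\ln\left[\frac{\pi_{1,1}(1-\pi_{1,0})}{\pi_{1,0}(1-\pi_{1,1})}\right]},$$ and let $\Phi(P_{1,0},P_{0,1})$ denote the error probability $P_E$ of the $K$-out-of-$N$ fusion rule with $K=\lceil T(P_{1,0},P_{0,1})\rceil$. Then $\Phi$ is a monotonically increasing function of $P_{1,0}$ when $P_{0,1}$ is held fixed, and a monotonically increasing function of $P_{0,1}$ when $P_{1,0}$ is held fixed.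
   Context: Binary hypothesis test between $H_0$ and $H_1$ with priors $P_0,P_1\in(0,1)$, $P_0+P_1=1$. There are $N$ sensors, each using the same fixed local threshold, so that conditionally on the hypothesis their local decisions $v_i\in\{0,1\}$ are i.i.d. with $P(v_i=1\mid H_1)=P_d$, $P(v_i=1\mid H_0)=P_f$, where $0<P_f<P_d<1$. Each sensor independently is Byzantine with probability $\alpha\in[0,1]$. Honest nodes send $u_i=v_i$; a Byzantine node sends $u_i=1$ with probability $P_{1,0}$ when $v_i=0$ and sends $u_i=0$ with probability $P_{0,1}$ when $v_i=1$. Hence conditionally on $H_j$ the $u_i$ are i.i.d. with $P(u_i=1\mid H_0)=\pi_{1,0}=\alpha(P_{1,0}(1-P_f)+(1-P_{0,1})P_f)+(1-\alpha)P_f$ and $P(u_i=1\mid H_1)=\pi_{1,1}=\alpha(P_{1,0}(1-P_d)+(1-P_{0,1})P_d)+(1-\alpha)P_d$. A $K$-out-of-$N$ fusion rule decides $H_1$ iff at least $K$ of the $u_i$ equal $1$; its error probability is $P_E=P_0Q_F+P_1(1-Q_D)$ with $Q_F=\sum_{i=K}^N\binom{N}{i}\pi_{1,0}^i(1-\pi_{1,0})^{N-i}$ and $Q_D=\sum_{i=K}^N\binom{N}{i}\pi_{1,1}^i(1-\pi_{1,1})^{N-i}$. The rule with $K=\lceil T\rceil$ is the optimal (MAP) fusion rule when $\alpha(P_{1,0}+P_{0,1})<1$. *)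

From HB Require Import structures.
From mathcomp Require Import all_boot all_order all_algebra.
From mathcomp Require Import reals exp.
Set Implicit Arguments. Unset Strict Implicit. Unset Printing Implicit Defensive.
Import Order.TTheory GRing.Theory Num.Theory.
Local Open Scope ring_scope.

Section DefsSec.
Variable R : realType.

(* P(u_i = 1 | H_0) *)
Definition pi10 (alpha P10 P01 Pf : R) : R :=
  alpha * (P10 * (1 - Pf) + (1 - P01) * Pf) + (1 - alpha) * Pf.

(* P(u_i = 1 | H_1) *)
Definition pi11 (alpha P10 P01 Pd : R) : R :=
  alpha * (P10 * (1 - Pd) + (1 - P01) * Pd) + (1 - alpha) * Pd.

(* Probability that at least K (an integer, possibly <= 0 or > N) of N i.i.d.
   Bernoulli(p) variables equal 1: sum_{i=K}^{N} C(N,i) p^i (1-p)^(N-i),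
   where the summation range is restricted to 0 <= i <= N. *)
Definition Qrule (N : nat) (K : int) (p : R) : R :=
  \sum_(i < N.+1 | (K <= (i : nat)%:Z)%R)
    ('C(N, i))%:R * p ^+ i * (1 - p) ^+ (N - i).

Definition PE (N : nat) (K : int) (P0 P1 q10 q11 : R) : R :=
  P0 * Qrule N K q10 + P1 * (1 - Qrule N K q11).

Definition Tthr (N : nat) (P0 P1 Pd Pf alpha P10 P01 : R) : R :=
  let a := pi10 alpha P10 P01 Pf in
  let b := pi11 alpha P10 P01 Pd in
  ln (P0 / P1 * ((1 - a) / (1 - b)) ^+ N) / ln ((b * (1 - a)) / (a * (1 - b))).

Definition Phi (N : nat) (P0 P1 Pd Pf alpha P10 P01 : R) : R :=
  PE N (Num.ceil (Tthr N P0 P1 Pd Pf alpha P10 P01)) P0 P1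
     (pi10 alpha P10 P01 Pf) (pi11 alpha P10 P01 Pd).

End DefsSec.

From HB Require Import structures.
From mathcomp Require Import all_boot all_order all_algebra.
From mathcomp Require Import reals exp.
From mathcomp Require Import ring lra.
Set Implicit Arguments. Unset Strict Implicit. Unset Printing Implicit Defensive.
Import Order.TTheory GRing.Theory Num.Theory.
Local Open Scope ring_scope.

(* The threshold K = ceil T is exactly the MAP rule, so Phi is the Bayes risk
   min over tests of P0 P(decide H1 | H0) + P1 P(decide H0 | H1) for N i.i.d.
   Bernoulli observations with success probabilities pi10 and pi11.  Both pi's
   are the images of Pf and Pd under the binary channel with crossover
   probabilities alpha P10 (0 -> 1) and alpha P01 (1 -> 0).  Increasing P10 or
   P01 amounts to composing this channel with a further binary channel, and
   garbling the observations can only increase the Bayes risk, by induction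
   on the number of observations since the Bayes risk is positively
   homogeneous and superadditive in the prior weights. *)

Section BayesRisk.
Variable R : realType.

(* The least value of c0 P(decide 1) + c1 P(decide 0) over tests based on n
   i.i.d. Bernoulli observations of parameter p (weight c0) or q (weight c1),
   computed by conditioning on the first observation. *)
Fixpoint bayes_risk (p q : R) (n : nat) (c0 c1 : R) : R :=
  match n with
  | 0 => Num.min c0 c1
  | n'.+1 => bayes_risk p q n' (c0 * (1 - p)) (c1 * (1 - q))
             + bayes_risk p q n' (c0 * p) (c1 * q)
  end.

(* Output-1 probability of a binary channel flipping 0 to 1 with probability a
   and 1 to 0 with probability b, when the input is 1 with probability x. *)
Definition binchan (a b x : R) : R := x * (1 - b) + (1 - x) * a.

Lemma bayes_riskZ p q n t c0 c1 : 0 <= t ->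
  bayes_risk p q n (t * c0) (t * c1) = t * bayes_risk p q n c0 c1.
Proof.
elim: n t c0 c1 => [|n IH] t c0 c1 t0 /=.
  by case: (leP c0 c1) => h; [rewrite !min_l | rewrite !min_r]; nra.
by rewrite -!mulrA !IH // -mulrDr.
Qed.

Lemma bayes_risk_superadditive p q n a0 a1 b0 b1 :
  bayes_risk p q n a0 a1 + bayes_risk p q n b0 b1
  <= bayes_risk p q n (a0 + b0) (a1 + b1).
Proof.
elim: n a0 a1 b0 b1 => [|n IH] a0 a1 b0 b1 /=.
  by rewrite le_min; apply/andP; split; apply: lerD; rewrite ?ge_min ?lexx ?orbT.
rewrite !mulrDl addrACA.
exact: lerD.
Qed.

Lemma bayes_risk_garble p q d e n c0 c1 : 0 <= d <= 1 -> 0 <= e <= 1 ->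
  bayes_risk p q n c0 c1 <= bayes_risk (binchan d e p) (binchan d e q) n c0 c1.
Proof.
move=> /andP[d0 d1] /andP[e0 e1].
elim: n c0 c1 => [|n IH] c0 c1 //=.
apply: le_trans (lerD (IH _ _) (IH _ _)).
set X0 := c0 * (1 - p); set Y0 := c1 * (1 - q); set X1 := c0 * p; set Y1 := c1 * q.
have -> : c0 * (1 - binchan d e p) = (1 - d) * X0 + e * X1.
  by rewrite /binchan /X0 /X1; ring.
have -> : c1 * (1 - binchan d e q) = (1 - d) * Y0 + e * Y1.
  by rewrite /binchan /Y0 /Y1; ring.
have -> : c0 * binchan d e p = d * X0 + (1 - e) * X1 by rewrite /binchan /X0 /X1; ring.
have -> : c1 * binchan d e q = d * Y0 + (1 - e) * Y1 by rewrite /binchan /Y0 /Y1; ring.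
apply: le_trans (lerD (bayes_risk_superadditive _ _ _ _ _ _ _)
                      (bayes_risk_superadditive _ _ _ _ _ _ _)).
rewrite !bayes_riskZ ?subr_ge0 // addrACA -!mulrDl.
by rewrite subrK [e + _]addrC subrK !mul1r.
Qed.

Lemma bayes_riskE p q n c0 c1 :
  bayes_risk p q n c0 c1 = \sum_(k < n.+1) ('C(n, k))%:R *
    Num.min (c0 * (p ^+ k * (1 - p) ^+ (n - k))) (c1 * (q ^+ k * (1 - q) ^+ (n - k))).
Proof.
elim: n c0 c1 => [|n IH] c0 c1.
  by rewrite /= big_ord_recl big_ord0 !expr0 !mulr1 addr0 mul1r.
rewrite /= !IH [in RHS]big_ord_recl /=.
under [in RHS]eq_bigr => i _ do rewrite binS natrD mulrDl.
rewrite big_split /= addrA; congr (_ + _).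
  rewrite [in RHS]big_ord_recr /= (bin_small (ltnSn n)) mul0r addr0.
  rewrite big_ord_recl /= !bin0 !subn0 !expr0 !mul1r -!mulrA -!exprS.
  congr (_ + _); apply: eq_bigr => i _; rewrite /bump /= add1n subSS.
  have -> : (n - i = (n - i.+1).+1)%N by rewrite subnSK.
  by rewrite !exprS; congr (_ * Num.min _ _); ring.
apply: eq_bigr => i _; rewrite /bump /= add1n subSS !exprS.
by congr (_ * Num.min _ _); ring.
Qed.

(* Comparing the threshold with k is the likelihood-ratio test at k ones. *)
Lemma threshold_le_natE (N k : nat) (P0 P1 a b : R) : (k <= N)%N ->
  0 < P0 -> 0 < P1 -> 0 < a -> a < b -> b < 1 ->
  (ln (P0 / P1 * ((1 - a) / (1 - b)) ^+ N) / ln ((b * (1 - a)) / (a * (1 - b)))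
     <= k%:R)
  = (P0 * (a ^+ k * (1 - a) ^+ (N - k)) <= P1 * (b ^+ k * (1 - b) ^+ (N - k))).
Proof.
move=> kN hP0 hP1 ha hab hb.
have hb0 : 0 < b by apply: lt_trans hab.
have ha1 : 0 < 1 - a by rewrite subr_gt0; apply: lt_trans hb.
have hb1 : 0 < 1 - b by rewrite subr_gt0.
set Y := (b * (1 - a)) / (a * (1 - b)).
set X := P0 / P1 * ((1 - a) / (1 - b)) ^+ N.
have hY : 1 < Y by rewrite /Y ltr_pdivlMr ?mulr_gt0 // mul1r; nra.
have hX : 0 < X by rewrite /X !mulr_gt0 ?invr_gt0 ?exprn_gt0 ?divr_gt0.
have hY0 : 0 < Y by apply: lt_trans hY.
rewrite ler_pdivrMr ?ln_gt0 // mulr_natl -lnXn // ler_ln ?posrE ?exprn_gt0 //.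
set W := P1 * a ^+ k * (1 - b) ^+ N / (1 - a) ^+ k.
have hW : 0 < W by rewrite /W !mulr_gt0 ?invr_gt0 ?exprn_gt0.
rewrite -(ler_pM2r hW).
have eA : (1 - a) ^+ N = (1 - a) ^+ k * (1 - a) ^+ (N - k) by rewrite -exprD subnKC.
have eB : (1 - b) ^+ N = (1 - b) ^+ k * (1 - b) ^+ (N - k) by rewrite -exprD subnKC.
have -> : X * W = P0 * (a ^+ k * (1 - a) ^+ (N - k)).
  rewrite /X /W expr_div_n eA eB.
  by field; rewrite ?expf_neq0 ?gt_eqF.
have -> : Y ^+ k * W = P1 * (b ^+ k * (1 - b) ^+ (N - k)).
  rewrite /Y /W !expr_div_n !exprMn eB.
  by field; rewrite ?expf_neq0 ?gt_eqF.
by [].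
Qed.

Lemma PE_ceil_threshold (N : nat) (P0 P1 a b : R) :
  0 < P0 -> 0 < P1 -> 0 < a -> a < b -> b < 1 ->
  PE N (Num.ceil (ln (P0 / P1 * ((1 - a) / (1 - b)) ^+ N)
                  / ln ((b * (1 - a)) / (a * (1 - b))))) P0 P1 a b
  = bayes_risk a b N P0 P1.
Proof.
move=> hP0 hP1 ha hab hb; set T := _ / _.
have sum_binomial : \sum_(i < N.+1) ('C(N, i))%:R * b ^+ i * (1 - b) ^+ (N - i) = 1.
  have := expr1n R N; rewrite -{1}(subrK b 1) exprDn => binomial.
  rewrite -[RHS]binomial.
  by apply: eq_bigr => i _; rewrite -mulr_natl; ring.
rewrite bayes_riskE /PE /Qrule -[X in P1 * (X - _)]sum_binomial.
rewrite [X in P1 * (X - _)](bigID (fun i : 'I_N.+1 => (Num.ceil T <= (i : nat)%:Z)%R)) /=.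
rewrite [X in P1 * X]addrAC subrr add0r !mulr_sumr.
rewrite [X in X + _]big_mkcond [X in _ + X]big_mkcond /=.
rewrite -big_split /=; apply: eq_bigr => i _.
have iN : (i <= N)%N by rewrite -ltnS.
rewrite ceil_le_int -[(i%:Z)%:~R]/(i%:R) /T threshold_le_natE //.
by case: leP => h /=; rewrite ?addr0 ?add0r; ring.
Qed.

Lemma binchan_ltr a b x y : a + b < 1 -> x < y -> binchan a b x < binchan a b y.
Proof. by rewrite /binchan => ab xy; nra. Qed.

Lemma binchan_factor a b a' b' : 0 <= a <= a' -> 0 <= b <= b' -> a' + b' < 1 ->
  exists d e, [/\ 0 <= d <= 1, 0 <= e <= 1 &
                  forall x, binchan a' b' x = binchan d e (binchan a b x)].
Proof.
move=> /andP[a0 aa'] /andP[b0 bb'] ab'.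
have c_gt0 : 0 < 1 - a - b by lra.
pose r := (1 - a' - b') / (1 - a - b).
have r0 : 0 <= r by rewrite divr_ge0 //; lra.
have r1 : r <= 1 by rewrite ler_pdivrMr // mul1r; lra.
exists (a' - a * r), (b' - b * r).
have de : (a' - a * r) + (b' - b * r) = 1 - r by rewrite /r; field; rewrite gt_eqF.
split; [apply/andP; split; nra | apply/andP; split; nra |].
by move=> x; rewrite /binchan /r; field; rewrite gt_eqF.
Qed.

Lemma bayes_risk_binchan_mono p q n c0 c1 a b a' b' :
  0 <= a <= a' -> 0 <= b <= b' -> a' + b' < 1 ->
  bayes_risk (binchan a b p) (binchan a b q) n c0 c1
  <= bayes_risk (binchan a' b' p) (binchan a' b' q) n c0 c1.
Proof.
move=> ha hb hab; have [d [e [hd he factor]]] := binchan_factor ha hb hab.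
by rewrite !factor; apply: bayes_risk_garble.
Qed.

Lemma Phi_bayes_risk (N : nat) (P0 P1 Pd Pf alpha P10 P01 : R) :
  0 < P0 -> 0 < P1 -> 0 < Pf -> Pf < Pd -> Pd < 1 ->
  0 <= alpha * P10 -> 0 <= alpha * P01 -> alpha * P10 + alpha * P01 < 1 ->
  Phi N P0 P1 Pd Pf alpha P10 P01
  = bayes_risk (binchan (alpha * P10) (alpha * P01) Pf)
               (binchan (alpha * P10) (alpha * P01) Pd) N P0 P1.
Proof.
move=> hP0 hP1 hf hfd hd ha hb hab.
have pi10E : pi10 alpha P10 P01 Pf = binchan (alpha * P10) (alpha * P01) Pf.
  by rewrite /pi10 /binchan; ring.
have pi11E : pi11 alpha P10 P01 Pd = binchan (alpha * P10) (alpha * P01) Pd.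
  by rewrite /pi11 /binchan; ring.
have at0 : binchan (alpha * P10) (alpha * P01) 0 = alpha * P10.
  by rewrite /binchan; ring.
have at1 : binchan (alpha * P10) (alpha * P01) 1 = 1 - alpha * P01.
  by rewrite /binchan; ring.
rewrite /Phi /Tthr /= pi10E pi11E PE_ceil_threshold ?binchan_ltr //.
- by apply: le_lt_trans (binchan_ltr hab hf); rewrite at0.
- by apply: (lt_le_trans (binchan_ltr hab hd)); rewrite at1 lerBlDr lerDl.
Qed.

Lemma Phi_mono (N : nat) (P0 P1 Pd Pf alpha P10 P10' P01 P01' : R) :
  0 < P0 -> 0 < P1 -> 0 < Pf -> Pf < Pd -> Pd < 1 -> 0 <= alpha ->
  0 <= P10 <= P10' -> 0 <= P01 <= P01' -> alpha * (P10' + P01') < 1 ->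
  Phi N P0 P1 Pd Pf alpha P10 P01 <= Phi N P0 P1 Pd Pf alpha P10' P01'.
Proof.
move=> hP0 hP1 hf hfd hd ha /andP[x0 xx'] /andP[y0 yy'] hs.
have hx : 0 <= alpha * P10 <= alpha * P10' by rewrite mulr_ge0 ?ler_wpM2l.
have hy : 0 <= alpha * P01 <= alpha * P01' by rewrite mulr_ge0 ?ler_wpM2l.
have hs' : alpha * P10' + alpha * P01' < 1 by rewrite -mulrDr.
have [hx0 hx'] := andP hx; have [hy0 hy'] := andP hy.
rewrite !Phi_bayes_risk ?(le_trans hx0 hx') ?(le_trans hy0 hy') //; last by lra.
exact: bayes_risk_binchan_mono.
Qed.

End BayesRisk.

Theorem lemma6 (R : realType) (N : nat) (P0 P1 Pd Pf alpha : R) :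
  0 < P0 < 1 -> 0 < P1 < 1 -> P0 + P1 = 1 ->
  0 < Pf -> Pf < Pd -> Pd < 1 ->
  0 <= alpha -> alpha <= 1 / 2 ->
  (forall P10 P10' P01 : R,
      0 <= P10 <= 1 -> 0 <= P10' <= 1 -> 0 <= P01 <= 1 ->
      alpha * (P10 + P01) < 1 -> alpha * (P10' + P01) < 1 ->
      P10 <= P10' ->
      Phi N P0 P1 Pd Pf alpha P10 P01 <= Phi N P0 P1 Pd Pf alpha P10' P01) /\
  (forall P10 P01 P01' : R,
      0 <= P10 <= 1 -> 0 <= P01 <= 1 -> 0 <= P01' <= 1 ->
      alpha * (P10 + P01) < 1 -> alpha * (P10 + P01') < 1 ->
      P01 <= P01' ->
      Phi N P0 P1 Pd Pf alpha P10 P01 <= Phi N P0 P1 Pd Pf alpha P10 P01').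
Proof.
move=> /andP[hP0 _] /andP[hP1 _] _ hf hfd hd ha _.
split.
- move=> P10 P10' P01 /andP[x0 _] _ /andP[y0 _] _ hs' xx'.
  by apply: Phi_mono; rewrite ?x0 ?y0 ?lexx.
- move=> P10 P01 P01' /andP[x0 _] /andP[y0 _] _ _ hs' yy'.
  by apply: Phi_mono; rewrite ?x0 ?y0 ?lexx.
Qed.
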